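(* Let $k\ge r\ge3$ and $p,t\ge0$ be integers, let $\pi\in\mathbb{C}_{=}(k,r|p,t)$ with $\pi^{(2)}_{p+1}=2t+2$, and let $s$ be the smallest positive integer such that $\pi^{(2)}_s=\pi^{(2)}_{p+1}+4(p-s+1)$ and $\pi^{(2)}_s$ is of starting type $s_0$ or $s_1$. Then: (1) $\pi^{(2)}_s+2$ does not occur in $\pi$; (2) for every $i<s$ with $\pi^{(2)}_i=\pi^{(2)}_{p+1}+4(p-i+1)$, the part $\pi^{(2)}_i$ is of starting type $s_3$.
   Context: A partition $\pi=(\pi_1,\dots,\pi_\ell)$ is a finite non-increasing sequence of positive integers; ''$a$ occurs in $\pi$'' means $a=\pi_i$ for some $i$. Göllnitz–Gordon marking: $GG(\pi)$ assigns a positive integer (mark) to each part, processing the parts from smallest to largest; $\pi_i$ receives the smallest positive integer different from the marks of all parts $\pi_g$ with $g>i$ and $\pi_i-\pi_g\le 2$, where $\pi_i-\pi_g<2$ is required when $\pi_i$ is odd. An ''$r$-marked part $a$'' is a part equal to $a$ with mark $r$. $N_i(\pi)$ is the number of parts with mark $i$; $\pi^{(i)}_1\ge\dots\ge\pi^{(i)}_{N_i(\pi)}$ are the parts with mark $i$, with $\pi^{(i)}_0=+\infty$, $\pi^{(i)}_{N_i(\pi)+1}=-\infty$. $\mathbb{C}(k,r)$: partitions with (i) no odd part repeated; (ii) $\pi_i\ge\pi_{i+k-1}+2$ for $1\le i\le\ell-k+1$, strict if $\pi_i$ even; (iii) at most $r-1$ parts $\le 2$. Starting types: for $\pi\in\mathbb{C}(k,r)$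 with $N_2=N_2(\pi)\ge1$, let $l$ be the largest integer in $\{0,\dots,N_2\}$ such that no odd part of $\pi$ is $\ge\pi^{(2)}_l$; for $l<i\le N_2$, $\pi^{(2)}_i$ has type $s_{-1}$. For $b=1,\dots,l$ in increasing order, type and auxiliary $\sigma_b$: for $b=1$: Case 1: 1-marked part $\pi^{(2)}_1-1$ exists and $\pi^{(2)}_1+2$ does not occur: type $s_0$, $\sigma_1=\pi^{(2)}_1-1$; Case 2: 1-marked $\pi^{(2)}_1-2$ exists and $\pi^{(2)}_1+2$ does not occur: type $s_1$, $\sigma_1=\pi^{(2)}_1-2$; Case 3: 1-marked $\pi^{(2)}_1+2$ exists: type $s_2$, $\sigma_1=\pi^{(2)}_1+2$; Case 4: 1-marked $\pi^{(2)}_1$ exists: type $s_3$, $\sigma_1=\pi^{(2)}_1$. For $2\le b\le l$: Case 1: 1-marked $\pi^{(2)}_b-1$ exists and, if a 1-marked $\pi^{(2)}_b+2$ exists, $\sigma_{b-1}=\pi^{(2)}_b+2$: type $s_0$, $\sigma_b=\pi^{(2)}_b-1$; Case 2: same with $\pi^{(2)}_b-2$: type $s_1$, $\sigma_b=\pi^{(2)}_b-2$; Case 3: 1-marked $\pi^{(2)}_b+2$ exists and $\sigma_{b-1}\ne\pi^{(2)}_b+2$: type $s_2$, $\sigma_b=\pi^{(2)}_b+2$; Case 4: 1-marked $\pi^{(2)}_b$ exists: type $s_3$, $\sigma_b=\pi^{(2)}_b$. $\mathbb{C}_{=}(k,r|p,t)$: the set of $\pi\in\mathbb{C}(k,r)$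 such that (1) the largest odd part of $\pi$ is $2t+1$; (2) the mark of $2t+1$ in $GG(\pi)$ is at most $2$; (3) $\pi^{(2)}_p\ge 2t+2$ and $\pi^{(2)}_{p+1}\le 2t+2$; (4) if there is a 2-marked part $2t+2$ of starting type $s_0$, then $\pi^{(2)}_{p+1}=2t+2$ and there exists $1\le i\le p+1$ with $\pi^{(2)}_i=\pi^{(2)}_{p+1}+4(p-i+1)$ and $\pi^{(2)}_i$ occurring exactly once in $\pi$; (5) if there is a 2-marked part $2t+2$ of starting type $s_2$, then $\pi^{(2)}_p=2t+2$; (6) if $2t+2$ occurs in $\pi$ and there is no 2-marked part $2t+2$, then $\pi^{(2)}_p=2t+4$, it is of starting type $s_3$, and there exists $1\le i\le p$ with $\pi^{(2)}_i=\pi^{(2)}_p+4(p-i)$ such that $\pi^{(2)}_i+2$ does not occur in $\pi$. *)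

(* Partitions are sequences of nat, listed non-increasingly
   (pi = [:: pi_1; ...; pi_l]); indices in the paper are 1-based. *)
From mathcomp Require Import all_boot all_order all_algebra.
Set Implicit Arguments. Unset Strict Implicit. Unset Printing Implicit Defensive.

Definition is_partition (pi : seq nat) : bool :=
  sorted geq pi && all (fun x => 0 < x) pi.

Definition mex1 (L : seq nat) : nat :=
  head 1 [seq n <- iota 1 (size L).+1 | n \notin L].

(* Goellnitz-Gordon conflict: part x (larger index-wise earlier) vs a
   smaller-or-equal part y (later in the list): x - y <= 2, and x - y < 2
   when x is odd. *)
Definition gg_conflict (x y : nat) : bool :=
  if odd x then x < y + 2 else x <= y + 2.

(* GG(pi): list of marks, aligned with pi; parts processed from the
   smallest (end of the list) to the largest. *)
Fixpoint gg (s : seq nat) : seq nat :=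
  match s with
  | [::] => [::]
  | x :: s' =>
      let ms := gg s' in
      mex1 [seq m.2 | m <- zip s' ms & gg_conflict x m.1] :: ms
  end.

Definition marked1 (pi : seq nat) (a : nat) : bool :=
  has (fun x => (x.1 == a) && (x.2 == 1)) (zip pi (gg pi)).

Definition parts_mark (i : nat) (pi : seq nat) : seq nat :=
  [seq x.1 | x <- zip pi (gg pi) & x.2 == i].

Definition N2 (pi : seq nat) : nat := size (parts_mark 2 pi).

(* pi^(2)_j for 1 <= j <= N_2 *)
Definition pi2 (pi : seq nat) (j : nat) : nat := nth 0 (parts_mark 2 pi) j.-1.

(* extended values, for pi^(2)_0 = +oo and pi^(2)_{N_2+1} = -oo *)
Inductive ext := EPinf | EFin of nat | EMinf.

Definition ext_le (a b : ext) : bool :=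
  match a, b with
  | EMinf, _ => true
  | _, EPinf => true
  | EFin x, EFin y => x <= y
  | _, _ => false
  end.

(* pi^(2)_j as an extended value (indices > N_2 + 1 also give -oo; they
   never matter) *)
Definition pi2x (pi : seq nat) (j : nat) : ext :=
  if j == 0 then EPinf else if j <= N2 pi then EFin (pi2 pi j) else EMinf.

(* the integer l of the starting-type definition: the largest j in
   {0..N_2} such that no odd part of pi is >= pi^(2)_j *)
Definition lstart (pi : seq nat) : nat :=
  \max_(j < (N2 pi).+1 |
        (j == 0 :> nat) || all (fun x => ~~ odd x || (x < pi2 pi j)) pi) j.

Inductive stype := Sm1 | S0 | S1 | S2 | S3.

(* one step of the starting-type procedure for a 2-marked part v;
   first = (b == 1); sigprev = sigma_{b-1}.  Cases are tried in order. *)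
Definition stype_step (pi : seq nat) (first : bool) (sigprev : option nat)
    (v : nat) : option (stype * nat) :=
  if first then
    if marked1 pi (v - 1) && (v + 2 \notin pi) then Some (S0, v - 1)
    else if marked1 pi (v - 2) && (v + 2 \notin pi) then Some (S1, v - 2)
    else if marked1 pi (v + 2) then Some (S2, v + 2)
    else if marked1 pi v then Some (S3, v)
    else None
  else
    let c := marked1 pi (v + 2) ==> (sigprev == Some (v + 2)) in
    if marked1 pi (v - 1) && c then Some (S0, v - 1)
    else if marked1 pi (v - 2) && c then Some (S1, v - 2)
    else if marked1 pi (v + 2) && (sigprev != Some (v + 2)) then Some (S2, v + 2)
    else if marked1 pi v then Some (S3, v)
    else None.

Fixpoint stypes_aux (pi : seq nat) (first : bool) (sig : option nat)
    (vs : seq nat) : seq (option stype) :=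
  match vs with
  | [::] => [::]
  | v :: vs' =>
      let r := stype_step pi first sig v in
      omap fst r :: stypes_aux pi false (omap snd r) vs'
  end.

(* starting type of the 2-marked part pi^(2)_j (1 <= j <= N_2);
   None when j is out of range or no case applies *)
Definition start_type (pi : seq nat) (j : nat) : option stype :=
  if (0 < j) && (j <= N2 pi) then
    if j <= lstart pi then
      nth None (stypes_aux pi true None (take (lstart pi) (parts_mark 2 pi))) j.-1
    else Some Sm1
  else None.

Definition inC (k r : nat) (pi : seq nat) : Prop :=
  is_partition pi /\
  (forall x, odd x -> count_mem x pi <= 1) /\
  (forall i, i + k - 1 < size pi ->
     if odd (nth 0 pi i) then nth 0 pi (i + k - 1) + 2 <= nth 0 pi i
     else nth 0 pi (i + k - 1) + 2 < nth 0 pi i) /\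
  count (fun x => x <= 2) pi <= r - 1.

Definition has2_type (pi : seq nat) (a : nat) (T : stype) : Prop :=
  exists j, [/\ 0 < j, j <= N2 pi, pi2 pi j = a & start_type pi j = Some T].

Definition inCeq (k r p t : nat) (pi : seq nat) : Prop :=
  inC k r pi /\
  ((2 * t + 1) \in pi /\ forall x, x \in pi -> odd x -> x <= 2 * t + 1) /\
  (exists i, [/\ i < size pi, nth 0 pi i = 2 * t + 1 & nth 0 (gg pi) i <= 2]) /\
  (ext_le (EFin (2 * t + 2)) (pi2x pi p) /\ ext_le (pi2x pi p.+1) (EFin (2 * t + 2))) /\
  (has2_type pi (2 * t + 2) S0 ->
     pi2x pi p.+1 = EFin (2 * t + 2) /\
     exists i, [/\ 1 <= i, i <= p.+1,
                   pi2 pi i = pi2 pi p.+1 + 4 * (p.+1 - i)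
                 & count_mem (pi2 pi i) pi = 1]) /\
  (has2_type pi (2 * t + 2) S2 -> pi2x pi p = EFin (2 * t + 2)) /\
  ((2 * t + 2) \in pi ->
   ~ (exists j, [/\ 0 < j, j <= N2 pi & pi2 pi j = 2 * t + 2]) ->
     pi2x pi p = EFin (2 * t + 4) /\ start_type pi p = Some S3 /\
     exists i, [/\ 1 <= i, i <= p, pi2 pi i = pi2 pi p + 4 * (p - i)
                 & (pi2 pi i + 2) \notin pi]).

(* the property defining s in Lemma 2.13 (integer arithmetic for p - s + 1) *)
Definition s_prop (pi : seq nat) (p s : nat) : Prop :=
  [/\ 0 < s, s <= N2 pi,
      ((pi2 pi s)%:Z = (pi2 pi p.+1)%:Z + 4 * (p%:Z - s%:Z + 1))%R
    & start_type pi s = Some S0 \/ start_type pi s = Some S1].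

From mathcomp Require Import all_boot all_order all_algebra.
From mathcomp Require Import zify.
Set Implicit Arguments. Unset Strict Implicit. Unset Printing Implicit Defensive.

(* Up to the
   index l of the starting-type procedure, the 2-marked parts are even and
   larger than every odd part, so consecutive ones differ by at least 4, and
   a part x + 1 next to a 2-marked part x never occurs.
   (1) If pi^(2)_s + 2 occurred it would be 1-marked (pi^(2)_s itself cannot
   be, as it conflicts with sigma_s), which blocks types s_0 and s_1 unless
   sigma_(s-1) = pi^(2)_s + 2; that forces pi^(2)_(s-1) = pi^(2)_s + 4 of
   type s_1, against the minimality of s.
   (2) Along a chain pi^(2)_i, ..., pi^(2)_s with steps of exactly 4, type
   s_2 propagates to the next part (sigma = x + 2 while x - 2 is 1-marked),
   so it would reach s; types s_0, s_1 are excluded by minimality, and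
   every part of the chain has some type, hence s_3. *)

Local Notation GG s := (zip s (gg s)).

Lemma mex1_notin L : mex1 L \notin L.
Proof.
rewrite /mex1; set F := [seq n <- iota 1 (size L).+1 | n \notin L].
have F_nil : F != [::].
  apply/eqP => F_eq; have sub : {subset iota 1 (size L).+1 <= L}.
    move=> n n_in; apply/negPn/negP => n_notin.
    have nF : n \in F by rewrite mem_filter n_notin n_in.
    by rewrite F_eq in nF.
  by have := uniq_leq_size (iota_uniq 1 (size L).+1) sub; rewrite size_iota ltnn.
have : head 1 F \in F by case: F F_nil => //= a ? _; rewrite mem_head.
by rewrite mem_filter => /andP[].
Qed.

Lemma mex1_eq1 L : 1 \notin L -> mex1 L = 1.
Proof. by rewrite /mex1 /= => ->. Qed.

Lemma size_gg s : size (gg s) = size s.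
Proof. by elim: s => //= x s ->. Qed.

Lemma mem_GG_part s a m : (a, m) \in GG s -> a \in s.
Proof. by move=> /(map_f fst); rewrite -[map _ _]/(unzip1 _) unzip1_zip // size_gg. Qed.

Lemma GG_mark_exists s a : a \in s -> exists m, (a, m) \in GG s.
Proof.
rewrite -{1}(@unzip1_zip _ _ s (gg s)) ?size_gg //.
by case/mapP=> [[b m] ab_in /= ->]; exists m.
Qed.

Lemma geq_trans : transitive geq.
Proof. by move=> a b c /= ba cb; apply: leq_trans cb ba. Qed.

Lemma GG_conflict_neq s a ma b mb : sorted geq s ->
  (a, ma) \in GG s -> (b, mb) \in GG s -> b < a -> gg_conflict a b -> ma != mb.
Proof.
elim: s => [|x s IH] //= s_sorted.
have x_max : all (geq x) s := order_path_min geq_trans s_sorted.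
rewrite !in_cons => /orP[/eqP[-> ->]|a_in] /orP[/eqP[-> ->]|b_in].
- by rewrite ltnn.
- move=> _ conf; apply: contraNneq (mex1_notin [seq m.2 | m <- GG s & gg_conflict x m.1]).
  by move=> ->; apply/mapP; exists (b, mb); rewrite // mem_filter conf.
- by have := allP x_max a (mem_GG_part a_in); rewrite /= leqNgt => /negbTE->.
- exact: IH (path_sorted s_sorted) a_in b_in.
Qed.

Lemma GG_mark1_below s a : sorted geq s -> a \in s ->
  exists2 b, b <= a <= b + 2 & (b, 1) \in GG s.
Proof.
move=> s_sorted /GG_mark_exists[m]; elim: s s_sorted => [|x s IH] //= s_sorted.
rewrite in_cons => /orP[/eqP[-> _]|a_in]; last first.
  by have [b ? b_in] := IH (path_sorted s_sorted) a_in; exists b; rewrite // in_cons b_in orbT.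
have x_max : all (geq x) s := order_path_min geq_trans s_sorted.
have [/mapP[[b mb]]|no1] := boolP (1 \in [seq m.2 | m <- GG s & gg_conflict x m.1]).
  rewrite mem_filter /= => /andP[conf b_in] /= mb1; exists b; last by rewrite in_cons mb1 b_in orbT.
  by have /= := allP x_max _ (mem_GG_part b_in); move: conf; rewrite /gg_conflict; case: ifP; lia.
by exists x; rewrite ?leqnn ?leq_addr // (mex1_eq1 no1) mem_head.
Qed.

Lemma mem_parts_mark i s y : y \in parts_mark i s -> (y, i) \in GG s.
Proof. by case/mapP=> [[a m]]; rewrite mem_filter /= => /andP[/eqP <- ?] ->. Qed.

Lemma parts_mark_pairwise i s : sorted geq s ->
  pairwise (fun a b => (b <= a) && ~~ gg_conflict a b) (parts_mark i s).
Proof.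
elim: s => [|x s IH] //= s_sorted; have s'_sorted := path_sorted s_sorted.
have x_max : all (geq x) s := order_path_min geq_trans s_sorted.
rewrite /parts_mark /=; case: eqP => [mark_x|_]; last exact: IH.
rewrite /= (IH s'_sorted) andbT; apply/allP => y /mem_parts_mark y_in.
rewrite [y <= x](allP x_max _ (mem_GG_part y_in)) /=.
apply: contraNN (mex1_notin [seq m.2 | m <- GG s & gg_conflict x m.1]) => conf.
by rewrite mark_x; apply/mapP; exists (y, i); rewrite // mem_filter conf.
Qed.

Lemma marked1E pi a : marked1 pi a = ((a, 1) \in GG pi).
Proof.
apply/hasP/idP => [[[x m] xm_in /andP[/eqP <- /eqP <-]] // | a_in].
by exists (a, 1); rewrite //= !eqxx.
Qed.

Lemma marked1_mem pi a : marked1 pi a -> a \in pi.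
Proof. by rewrite marked1E => /mem_GG_part. Qed.

Definition stype_sigma (T : stype) (v : nat) : nat :=
  match T with S0 => v - 1 | S1 => v - 2 | S2 => v + 2 | _ => v end.

Lemma stype_step_spec pi first sg v T sig : stype_step pi first sg v = Some (T, sig) ->
  [/\ T <> Sm1, sig = stype_sigma T v & marked1 pi sig].
Proof.
rewrite /stype_step; case: first;
by do 4?[case: ifP => [/andP[m1 _] [<- <-] | _] | case: ifP => [m1 [<- <-] | _]].
Qed.

Lemma stype_step_S2 pi first sg v : marked1 pi (v + 2) -> sg != Some (v + 2) ->
  omap fst (stype_step pi first sg v) = Some S2.
Proof.
move=> m1 sg_ne; rewrite /stype_step m1 (marked1_mem m1) (negbTE sg_ne).
by case: first; rewrite /= ?andbF.
Qed.

Lemma stype_step_defined pi first sg v :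
  (exists2 b, b <= v <= b + 2 & marked1 pi b) ->
  ((v + 2) \in pi -> marked1 pi (v + 2) || marked1 pi v) ->
  stype_step pi first sg v <> None.
Proof.
case=> b /andP[b_le b_ge] m1b near.
have {b b_le b_ge m1b} : [|| marked1 pi v, marked1 pi (v - 1) | marked1 pi (v - 2)].
  have : b = v \/ b = v - 1 \/ b = v - 2 by lia.
  by case=> [<-|[<-|<-]]; rewrite m1b ?orbT.
move: near; rewrite /stype_step; case: first; case: (v + 2 \in pi);
case: (marked1 pi (v + 2)); case: (marked1 pi v); case: (marked1 pi (v - 1));
by case: (marked1 pi (v - 2)); case: (sg == Some (v + 2)) => //= /(_ isT).
Qed.

(* [stypes_sigma pi first sig vs n] is the value of sigma passed to the n-th
   step of [stypes_aux pi first sig vs]; thus [start_sigma pi j] is the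
   sigma_j of the paper, with sigma_0 = None. *)
Fixpoint stypes_sigma pi (first : bool) (sig : option nat) (vs : seq nat) (n : nat) :
    option nat :=
  match vs, n with
  | v :: vs', n'.+1 => stypes_sigma pi false (omap snd (stype_step pi first sig v)) vs' n'
  | _, _ => sig
  end.

Lemma nth_stypes_aux pi first sig vs n : n < size vs ->
  nth None (stypes_aux pi first sig vs) n =
  omap fst (stype_step pi (first && (n == 0)) (stypes_sigma pi first sig vs n) (nth 0 vs n)).
Proof.
elim: vs first sig n => [|v vs IH] first sig [|n] //=; first by rewrite andbT.
by move=> n_lt; rewrite IH // andbF.
Qed.

Lemma stypes_sigmaS pi first sig vs n : n < size vs ->
  stypes_sigma pi first sig vs n.+1 =
  omap snd (stype_step pi (first && (n == 0)) (stypes_sigma pi first sig vs n) (nth 0 vs n)).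
Proof.
elim: vs first sig n => [|v vs IH] first sig [|n] //=; first by rewrite andbT; case: vs {IH}.
by move=> n_lt; rewrite IH // andbF.
Qed.

Definition start_sigma pi j := stypes_sigma pi true None (take (lstart pi) (parts_mark 2 pi)) j.

Definition start_step pi j := stype_step pi (j == 1) (start_sigma pi j.-1) (pi2 pi j).

Lemma start_sigma0 pi : start_sigma pi 0 = None.
Proof. by rewrite /start_sigma; case: take. Qed.

Lemma lstart_spec pi : lstart pi <= N2 pi /\
  (0 < lstart pi -> forall x, x \in pi -> odd x -> x < pi2 pi (lstart pi)).
Proof.
rewrite /lstart; elim/big_ind: _ => // [a b [a_le a_odd] [b_le b_odd]|j].
  by rewrite /maxn; case: ifP.
case/orP=> [/eqP -> // | /allP odd_lt]; split; first by rewrite -ltnS ltn_ord.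
by move=> _ x /odd_lt; case: odd.
Qed.

Lemma start_typeE pi j : 0 < j <= lstart pi -> start_type pi j = omap fst (start_step pi j).
Proof.
case: j => // j /andP[_ jl]; have [lN _] := lstart_spec pi.
rewrite /start_type /= jl (leq_trans jl lN) nth_stypes_aux ?size_takel //=.
by rewrite nth_take.
Qed.

Lemma start_sigmaE pi j : 0 < j <= lstart pi -> start_sigma pi j = omap snd (start_step pi j).
Proof.
case: j => // j /andP[_ jl]; have [lN _] := lstart_spec pi.
by rewrite /start_sigma stypes_sigmaS ?size_takel //= nth_take.
Qed.

Lemma start_type_le_lstart pi j T :
  start_type pi j = Some T -> T <> Sm1 -> 0 < j <= lstart pi.
Proof.
rewrite /start_type; case: ifP => // /andP[j0 _].
by case: ifP => [jl _ _ | _ [<-] //]; rewrite j0.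
Qed.

Section StartingTypes.

Variable pi : seq nat.
Hypothesis pi_partition : is_partition pi.

Let pi_sorted : sorted geq pi.
Proof. by case/andP: pi_partition. Qed.

Let part_gt0 x : x \in pi -> 0 < x.
Proof. by case/andP: pi_partition => _ /allP; apply. Qed.

Lemma marked1_below a : a \in pi -> exists2 b, b <= a <= b + 2 & marked1 pi b.
Proof.
by move=> /(GG_mark1_below pi_sorted)[b ? b_in]; exists b; rewrite // marked1E.
Qed.

Lemma marked1_conflict a b : b < a -> gg_conflict a b -> marked1 pi a -> ~~ marked1 pi b.
Proof.
rewrite !marked1E => ba conf a_in; apply/negP => b_in.
by have := GG_conflict_neq pi_sorted a_in b_in ba conf; rewrite eqxx.
Qed.

Lemma pi2_pairwise j j' : 0 < j -> j < j' -> j' <= N2 pi ->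
  (pi2 pi j' <= pi2 pi j) && ~~ gg_conflict (pi2 pi j) (pi2 pi j').
Proof.
move=> j0 jj' j'N; have /(pairwiseP 0) := parts_mark_pairwise 2 pi_sorted.
by apply; rewrite ?inE /=; rewrite /N2 in j'N; lia.
Qed.

Lemma odd_lt_pi2 j x : 0 < j <= lstart pi -> x \in pi -> odd x -> x < pi2 pi j.
Proof.
case/andP=> j0 jl x_in x_odd; have [lN l_odd] := lstart_spec pi.
have := l_odd (leq_trans j0 jl) x x_in x_odd.
case: (ltngtP j (lstart pi)) jl => // [j_lt _ | -> //].
by have /andP[le _] := pi2_pairwise j0 j_lt lN; lia.
Qed.

Lemma pi2_mem j : 0 < j <= lstart pi -> pi2 pi j \in pi.
Proof.
case/andP=> j0 jl; have [lN _] := lstart_spec pi.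
apply: (@mem_GG_part _ _ 2); apply: mem_parts_mark.
by rewrite /pi2 mem_nth // prednK // (leq_trans jl lN).
Qed.

Lemma pi2_even j : 0 < j <= lstart pi -> ~~ odd (pi2 pi j).
Proof. by move=> jP; apply/negP => /(odd_lt_pi2 jP (pi2_mem jP)); rewrite ltnn. Qed.

Lemma pi2_gap1 j : 0 < j -> j < lstart pi -> pi2 pi j.+1 + 4 <= pi2 pi j.
Proof.
move=> j0 jl; have [lN _] := lstart_spec pi.
have /andP[_ no_conf] := pi2_pairwise j0 (ltnSn j) (leq_trans jl lN).
have even_j : ~~ odd (pi2 pi j) by apply: pi2_even; rewrite j0 ltnW.
have even_j1 : ~~ odd (pi2 pi j.+1) by apply: pi2_even; rewrite /= jl.
by move: no_conf; rewrite /gg_conflict (negbTE even_j) -ltnNge; lia.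
Qed.

Lemma pi2_gap j j' : 0 < j -> j <= j' -> j' <= lstart pi ->
  pi2 pi j' + 4 * (j' - j) <= pi2 pi j.
Proof.
move=> j0; elim: j' => [|j' IH] jj' j'l; first lia.
case: (ltngtP j j'.+1) jj' => // [jj' _ | -> _]; last by rewrite subnn muln0 addn0.
by have := IH jj' (ltnW j'l); have := pi2_gap1 (leq_trans j0 jj') j'l; lia.
Qed.

Lemma pi2_gap_tight i j k : 0 < i -> i <= j -> j <= k -> k <= lstart pi ->
  pi2 pi i = pi2 pi k + 4 * (k - i) -> pi2 pi j = pi2 pi k + 4 * (k - j).
Proof.
move=> i0 ij jk kl eq_i.
have := pi2_gap i0 ij (leq_trans jk kl); have := pi2_gap (leq_trans i0 ij) jk kl; lia.
Qed.

Lemma marked1_add2 j : 0 < j <= lstart pi -> (pi2 pi j + 2) \in pi ->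
  marked1 pi (pi2 pi j + 2) || marked1 pi (pi2 pi j).
Proof.
move=> jP /marked1_below[b /andP[b_le b_ge] m1b].
have b_ne : b != pi2 pi j + 1.
  apply: contraTneq (marked1_mem m1b) => ->; apply/negP => /(odd_lt_pi2 jP).
  by have := pi2_even jP; rewrite oddD => /negbTE->; lia.
have : b = pi2 pi j + 2 \/ b = pi2 pi j by lia.
by case=> <-; rewrite m1b ?orbT.
Qed.

Lemma start_type_defined j : 0 < j <= lstart pi ->
  exists2 T, T <> Sm1 & start_type pi j = Some T.
Proof.
move=> jP; rewrite start_typeE //.
case E: (start_step pi j) => [[T sig]|]; first by exists T; have [] := stype_step_spec E.
exfalso; apply: (stype_step_defined _ (marked1_add2 jP) E).
exact: marked1_below (pi2_mem jP).
Qed.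

Lemma add2_mem_prev_S1 j : 0 < j <= lstart pi ->
  start_type pi j = Some S0 \/ start_type pi j = Some S1 -> (pi2 pi j + 2) \in pi ->
  [/\ 1 < j, pi2 pi j.-1 = pi2 pi j + 4 & start_type pi j.-1 = Some S1].
Proof.
move=> jP Tj add2_in; have /andP[j0 jl] := jP.
have v_even := pi2_even jP; have v_gt0 := part_gt0 (pi2_mem jP).
move: Tj; rewrite start_typeE //; case Ej: (start_step pi j) => [[T sig]|] /=; last by case.
have [_ sigE m1sig] := stype_step_spec Ej.
move=> T01; have {}T01 : T = S0 \/ T = S1 by case: T01 => [[]|[]]; auto.
have m1v2 : marked1 pi (pi2 pi j + 2).
  case/orP: (marked1_add2 jP add2_in) => // m1v.
  have [sig_lt conf] : sig < pi2 pi j /\ gg_conflict (pi2 pi j) sig.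
    by rewrite /gg_conflict (negbTE v_even); case: T01 sigE => -> -> /=; lia.
  by rewrite (negbTE (marked1_conflict sig_lt conf m1v)) in m1sig.
have sig_prev : start_sigma pi j.-1 = Some (pi2 pi j + 2).
  apply/eqP/contraT => sig_ne.
  by move: (stype_step_S2 (j == 1) m1v2 sig_ne); rewrite -/(start_step pi j) Ej; case: T01 => ->.
have j1 : 1 < j.
  rewrite ltn_neqAle j0 andbT; apply/eqP => j_eq1.
  by move: sig_prev; rewrite -j_eq1 start_sigma0.
have jP' : 0 < j.-1 <= lstart pi by apply/andP; split; lia.
have gap : pi2 pi j + 4 <= pi2 pi j.-1.
  by have := pi2_gap (j := j.-1) (j' := j) (andP jP').1 (leq_pred j) jl; lia.
move: sig_prev; rewrite start_sigmaE //.
case Ep: (start_step pi j.-1) => [[T' sig']|] //= [sig'E].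
have [_ sig'_def _] := stype_step_spec Ep; rewrite sig'E in sig'_def.
case: T' Ep sig'_def => Ep /= w_eq; try lia.
by split; [| lia | rewrite start_typeE // Ep].
Qed.

Lemma start_type_S2S j : 0 < j -> j < lstart pi -> pi2 pi j = pi2 pi j.+1 + 4 ->
  start_type pi j = Some S2 -> start_type pi j.+1 = Some S2.
Proof.
move=> j0 jl gap; have jP : 0 < j <= lstart pi by rewrite j0 ltnW.
have x_even := pi2_even jP.
rewrite !start_typeE //; case Ej: (start_step pi j) => [[T sig]|] //= [TS2].
have [_ sigE m1sig] := stype_step_spec Ej; rewrite TS2 /= in sigE.
rewrite /start_step /= start_sigmaE // Ej /= sigE.
apply: stype_step_S2; last by apply/eqP; case; lia.
have [b /andP[b_le b_ge] m1b] := marked1_below (pi2_mem jP).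
have b_ne_x : b != pi2 pi j.
  apply: contraTneq m1b => ->; apply: (marked1_conflict (a := pi2 pi j + 2)).
  - lia.
  - by rewrite /gg_conflict; case: ifP; lia.
  - by rewrite -sigE.
have b_ne_x1 : b != pi2 pi j - 1.
  apply: contraTneq (marked1_mem m1b) => ->; apply/negP => /(odd_lt_pi2 (j := j.+1)).
  by rewrite jl; move: x_even; lia.
by have -> : pi2 pi j.+1 + 2 = b by lia.
Qed.

Lemma start_type_S2_chain i j : 0 < i -> i <= j -> j <= lstart pi ->
  pi2 pi i = pi2 pi j + 4 * (j - i) ->
  start_type pi i = Some S2 -> start_type pi j = Some S2.
Proof.
move=> i0 ij; rewrite -(subnK ij); move: (j - i) => d {j ij}.
elim: d i i0 => [|d IH] i i0 jl; rewrite addnK => eq_i Ti //.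
rewrite addSnnS in jl eq_i *.
have eq_i1 : pi2 pi i.+1 = pi2 pi (d + i.+1) + 4 * (d + i.+1 - i.+1).
  by apply: (pi2_gap_tight i0 (leqnSn i) (leq_addl _ _) jl); lia.
by apply: IH => //; apply: start_type_S2S => //; lia.
Qed.

End StartingTypes.

Theorem lemma2p13 (k r p t : nat) (pi : seq nat) :
  3 <= r -> r <= k ->
  inCeq k r p t pi ->
  pi2x pi p.+1 = EFin (2 * t + 2) ->
  forall s : nat,
    s_prop pi p s ->
    (forall s' : nat, 0 < s' -> s' < s -> ~ s_prop pi p s') ->
    (pi2 pi s + 2) \notin pi /\
    (forall i : nat, 0 < i -> i < s ->
       ((pi2 pi i)%:Z = (pi2 pi p.+1)%:Z + 4 * (p%:Z - i%:Z + 1))%R ->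
       start_type pi i = Some S3).
Proof.
move=> _ _ [[partition _] _] _ s [s0 sN sZ Ts] s_min.
have sl : 0 < s <= lstart pi by case: Ts => /start_type_le_lstart; apply.
have s_propE j : 0 < j -> j < s -> pi2 pi j = pi2 pi s + 4 * (s - j) ->
    start_type pi j = Some S0 \/ start_type pi j = Some S1 -> s_prop pi p j.
  by move=> j0 js eq_j Tj; split => //; lia.
split.
  apply/negP => add2_in.
  have [s_gt1 prev_eq prev_S1] := add2_mem_prev_S1 partition sl Ts add2_in.
  by apply: (s_min s.-1); [lia | lia | apply: s_propE; [lia | lia | lia | right]].
move=> i i0 lt_is iZ.
have iE : pi2 pi i = pi2 pi s + 4 * (s - i) by lia.
have il : 0 < i <= lstart pi by lia.
have [[] T_def Ti //] := start_type_defined partition il.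
- by case: (s_min i) => //; apply: s_propE => //; left.
- by case: (s_min i) => //; apply: s_propE => //; right.
- have := start_type_S2_chain partition i0 (ltnW lt_is) (andP sl).2 iE Ti.
  by case: Ts => ->.
Qed.
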